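(* Let $m_{11},m_{12},m_{13},l_1,l_2\in k$ with $(m_{11},m_{12},m_{13})\neq0$, $m_{12}l_1^2+m_{13}l_2^2=m_{11}$, $l_1\neq0$ and $l_2=0$, and let $M=\begin{pmatrix}m_{11}&m_{12}&m_{13}\\ l_1m_{11}&l_1m_{12}&l_1m_{13}\\ l_2m_{11}&l_2m_{12}&l_2m_{13}\end{pmatrix}$. Then: (1) if $m_{12}\neq0$ and $m_{13}\neq0$, then $\mathcal{A}_{\mathcal{O}_{-1}(k^3)}(M)\cong\mathcal{A}_{\mathcal{O}_{-1}(k^3)}(E_{11}+E_{12}+E_{13}+E_{21}+E_{22}+E_{23})$; (2) if $m_{12}=0$ and $m_{13}\neq0$, then $\mathcal{A}_{\mathcal{O}_{-1}(k^3)}(M)\cong\mathcal{A}_{\mathcal{O}_{-1}(k^3)}(E_{13}+E_{23})$; (3) if $m_{12}\neq0$ and $m_{13}=0$, then $\mathcal{A}_{\mathcal{O}_{-1}(k^3)}(M)\cong\mathcal{A}_{\mathcal{O}_{-1}(k^3)}(E_{11}+E_{12}+E_{21}+E_{22})$.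
   Context: $k$ is an algebraically closed field of characteristic zero. $E_{ij}$ denotes the $3\times3$ matrix unit with $1$ in position $(i,j)$. For $M=(m_{ij})\in M_3(k)$, $\mathcal{A}_{\mathcal{O}_{-1}(k^3)}(M)$ is the connected cochain DG algebra whose underlying graded algebra is generated by degree-one $x_1,x_2,x_3$ subject to $x_ix_j=-x_jx_i$ ($i<j$), with differential determined by $\partial(x_i)=\sum_j m_{ij}x_j^2$ and the Leibniz rule; $\cong$ means isomorphism of DG algebras. *)

From HB Require Import structures.
From mathcomp Require Import all_boot all_order all_algebra.
From mathcomp Require Import mpoly.
Set Implicit Arguments. Unset Strict Implicit. Unset Printing Implicit Defensive.
Import GRing.Theory.
Local Open Scope ring_scope.

(* The -1 skew polynomial algebra O_{-1}(k^3) is modelled on the k-vector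
   space {mpoly K[3]} (basis: ordered monomials x1^a1 x2^a2 x3^a3, variables
   indexed 0,1,2 here), with the twisted multiplication
   x^a * x^b = (-1)^(sum_{j<i} a_i b_j) x^(a+b). *)

Section SkewAlg.
Variable K : fieldType.

Definition skew_sign (a b : 'X_{1..3}) : K :=
  (-1) ^+ (\sum_(i < 3) \sum_(j < 3 | (j < i)%N) (a i * b j))%N.

Definition skewmul (p q : {mpoly K[3]}) : {mpoly K[3]} :=
  \sum_(a <- msupp p) \sum_(b <- msupp q)
     (skew_sign a b * p@_a * q@_b) *: 'X_[(a + b)%MM].

Definition dexp (a : 'X_{1..3}) (i j : 'I_3) : 'X_{1..3} :=
  [multinom ((a l - (l == i)) + 2 * (l == j))%N | l < 3].

(* Differential of A(M) on the basis monomial x1^a1 x2^a2 x3^a3, obtained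
   from d(x_i) = sum_j m_ij x_j^2 by the graded Leibniz rule
   d(uv) = d(u) v + (-1)^{|u|} u d(v)  (x_j^2 is central):
   d(x_i^n) = d(x_i) x_i^(n-1) if n odd, 0 if n even. *)
Definition dmon (M : 'M[K]_3) (a : 'X_{1..3}) : {mpoly K[3]} :=
  \sum_(i < 3) (if odd (a i) then
      (-1) ^+ (\sum_(l < 3 | (l < i)%N) a l)%N *:
        \sum_(j < 3) M i j *: 'X_[dexp a i j]
    else 0).

Definition dM (M : 'M[K]_3) (p : {mpoly K[3]}) : {mpoly K[3]} :=
  \sum_(a <- msupp p) p@_a *: dmon M a.

Definition homogeneous (d : nat) (p : {mpoly K[3]}) : bool :=
  all (fun a : 'X_{1..3} => mdeg a == d) (msupp p).

Definition dg_iso (M M' : 'M[K]_3) (f : {mpoly K[3]} -> {mpoly K[3]}) : Prop :=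
  [/\ (forall (c : K) p q, f (c *: p + q) = c *: f p + f q) /\ bijective f,
      f 1 = 1,
      (forall p q, f (skewmul p q) = skewmul (f p) (f q)),
      (forall d p, homogeneous d p -> homogeneous d (f p))
    & (forall p, f (dM M p) = dM M' (f p))].

Definition dg_isomorphic (M M' : 'M[K]_3) : Prop := exists f, dg_iso M M' f.

(* matrix unit E_ij, with 1-based indices as in the paper *)
Definition E (i j : nat) : 'M[K]_3 := delta_mx (inord i.-1) (inord j.-1).

End SkewAlg.

From HB Require Import structures.
From mathcomp Require Import all_boot all_order all_algebra.
From mathcomp Require Import ssrcomplements mpoly zify ring.
Set Implicit Arguments.
Unset Strict Implicit.
Unset Printing Implicit Defensive.

Import GRing.Theory.
Local Open Scope ring_scope.

(* For c in (k^* )^3, the substitution x_i |-> c_i x_i, i.e. x^a |-> c^a x^a on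
   monomials, preserves the unit, the grading and the skew product, and since
   each d(x_i) is a combination of the squares x_j^2 it intertwines the
   differentials of A(M) and A(M') as soon as m_ij c_j^2 = c_i m'_ij.
   The matrix M is the rank-one matrix u v^T with u = (1, l1, 0) and
   v = (m11, m12, m13), where m11 = m12 l1^2.  The rescaling c = (t, t l1, s)
   carries it to (1, 1, 0)^T (m11 t, m12 l1^2 t, m13 s^2 / t), and t, s are
   chosen to make every nonzero entry 1; in case (1) s is a square root of
   t / m13, which exists because k is algebraically closed. *)

Section LinearExtension.
Variables (n : nat) (R : nzRingType) (V : lmodType R).
Implicit Types (g h : 'X_{1..n} -> V) (p : {mpoly R[n]}).

Definition mlinext g p : V := \sum_(m <- msupp p) p@_m *: g m.

Lemma mlinextE k g p : (msize p <= k)%N ->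
  mlinext g p = \sum_(m : 'X_{1..n < k}) p@_m *: g m.
Proof.
move=> le_pk; rewrite /mlinext (big_mksub 'X_{1..n < k}) ?msupp_uniq //=.
- by rewrite big_rmcond //= => m /memN_msupp_eq0 ->; rewrite scale0r.
- by move=> m /msize_mdeg_lt /leq_trans; apply.
Qed.

Lemma mlinext_is_linear g : linear (mlinext g).
Proof.
move=> a p q; set k := (msize p + msize q + msize (a *: p + q))%N.
rewrite !(mlinextE (k := k)); try by rewrite /k; lia.
rewrite scaler_sumr -big_split; apply: eq_bigr => m _.
by rewrite mcoeffD mcoeffZ scalerDl scalerA.
Qed.

HB.instance Definition _ g :=
  GRing.isLinear.Build R {mpoly R[n]} V *:%R (mlinext g) (mlinext_is_linear g).

Lemma mlinextX g m : mlinext g 'X_[m] = g m.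
Proof. by rewrite /mlinext msuppX big_seq1 mcoeffX eqxx scale1r. Qed.

Lemma eq_mlinext g h : g =1 h -> mlinext g =1 mlinext h.
Proof. by move=> eq_gh p; apply: eq_bigr => m _; rewrite eq_gh. Qed.

End LinearExtension.

Lemma linear_mlinext (n : nat) (R : nzRingType) (V W : lmodType R)
    (f : {linear V -> W}) (g : 'X_{1..n} -> V) (p : {mpoly R[n]}) :
  f (mlinext g p) = mlinext (f \o g) p.
Proof. by rewrite linear_sum; apply: eq_bigr => m _; rewrite linearZ. Qed.

Lemma mmap1D (n : nat) (R : comNzRingType) (h : 'I_n -> R) (m1 m2 : 'X_{1..n}) :
  mmap1 h (m1 + m2)%MM = mmap1 h m1 * mmap1 h m2.
Proof. by apply: commr_mmap1_M => i x; apply: mulrC. Qed.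

Section Rescale.
Variables (n : nat) (R : comNzRingType) (c : 'I_n -> R).

Definition rescale (p : {mpoly R[n]}) : {mpoly R[n]} :=
  mlinext (fun m => mmap1 c m *: 'X_[m]) p.

HB.instance Definition _ := GRing.Linear.copy rescale (mlinext _).

Lemma rescaleX m : rescale 'X_[m] = mmap1 c m *: 'X_[m].
Proof. exact: mlinextX. Qed.

Lemma mlinext_rescale (V : lmodType R) (g : 'X_{1..n} -> V) p :
  mlinext g (rescale p) = mlinext (fun m => mmap1 c m *: g m) p.
Proof.
rewrite /rescale (linear_mlinext (mlinext g)); apply: eq_mlinext => m /=.
by rewrite linearZ /= mlinextX.
Qed.

End Rescale.

Lemma rescaleK (n : nat) (R : comNzRingType) (c c' : 'I_n -> R) :
  (forall i, c' i * c i = 1) -> cancel (rescale c) (rescale c').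
Proof.
move=> c'c p; rewrite [LHS]mlinext_rescale [RHS]mpolyE.
apply: eq_mlinext => m /=; rewrite scalerA.
suff -> : mmap1 c m * mmap1 c' m = 1 by rewrite scale1r.
rewrite /mmap1 -big_split big1 // => i _.
by rewrite /= -exprMn mulrC c'c expr1n.
Qed.

Lemma scaler_mlinext (n : nat) (R : comNzRingType) (V : lmodType R)
    (x : R) (g : 'X_{1..n} -> V) (p : {mpoly R[n]}) :
  x *: mlinext g p = mlinext (fun m => x *: g m) p.
Proof.
by rewrite scaler_sumr; apply: eq_bigr => m _; rewrite !scalerA mulrC.
Qed.

Lemma msupp_rescale (n : nat) (R : idomainType) (c : 'I_n -> R)
    (p : {mpoly R[n]}) :
  (forall i, c i != 0) -> perm_eq (msupp (rescale c p)) (msupp p).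
Proof.
move=> c_neq0.
have -> : rescale c p = \sum_(m <- msupp p) (p@_m * mmap1 c m) *: 'X_[m].
  by apply: eq_bigr => m _; rewrite scalerA.
apply: msupp_sumX => // m; rewrite mcoeff_msupp => p_m_neq0.
by rewrite mulf_neq0 //; apply/prodf_neq0 => i _; rewrite expf_neq0.
Qed.

Lemma dexpDU (a : 'X_{1..3}) (i j : 'I_3) : (0 < a i)%N ->
  (dexp a i j + U_(i) = a + U_(j) + U_(j))%MM.
Proof.
move=> a_i_gt0; apply/mnmP => l.
rewrite !mnmDE mnmE !mnm1E [i == l]eq_sym [j == l]eq_sym.
by case: (eqVneq l i) => [->|_]; case: (_ == j) => /=; lia.
Qed.

Lemma mmap1_dexp (R : comNzRingType) (h : 'I_3 -> R) (a : 'X_{1..3})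
    (i j : 'I_3) :
  (0 < a i)%N -> mmap1 h (dexp a i j) * h i = mmap1 h a * h j ^+ 2.
Proof.
by move=> a_i_gt0; rewrite -mmap1U -mmap1D dexpDU // !mmap1D mmap1U -mulrA.
Qed.

Lemma skewmulE (K : fieldType) (p q : {mpoly K[3]}) :
  skewmul p q =
  mlinext (fun a => mlinext (fun b => skew_sign K a b *: 'X_[(a + b)%MM]) q) p.
Proof.
apply: eq_bigr => a _; rewrite scaler_sumr; apply: eq_bigr => b _.
by rewrite !scalerA [_ * skew_sign _ _ _]mulrC mulrA.
Qed.

Lemma dM_mlinext (K : fieldType) (M : 'M[K]_3) : dM M =1 mlinext (dmon M).
Proof. by []. Qed.

Section RescaleDG.
Variables (K : fieldType) (c : 'I_3 -> K).
Hypothesis c_neq0 : forall i, c i != 0.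

Lemma rescale_skewmul p q :
  rescale c (skewmul p q) = skewmul (rescale c p) (rescale c q).
Proof.
rewrite !skewmulE linear_mlinext mlinext_rescale; apply: eq_mlinext => a /=.
rewrite linear_mlinext mlinext_rescale scaler_mlinext.
apply: eq_mlinext => b /=.
by rewrite linearZ /= rescaleX mmap1D !scalerA mulrC.
Qed.

Lemma homogeneous_rescale d p : homogeneous d (rescale c p) = homogeneous d p.
Proof. exact/perm_all/msupp_rescale. Qed.

Lemma rescale_bijective : bijective (rescale c).
Proof.
by exists (rescale (fun i => (c i)^-1)); apply: rescaleK => i;
  rewrite ?mulVf ?mulfV.
Qed.

Variables (M M' : 'M[K]_3).
Hypothesis hM : forall i j, M i j * c j ^+ 2 = c i * M' i j.

Lemma rescale_dmon a : rescale c (dmon M a) = mmap1 c a *: dmon M' a.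
Proof.
rewrite linear_sum scaler_sumr; apply: eq_bigr => i _.
case: ifP => [a_i_odd|_]; last by rewrite linear0 scaler0.
rewrite linearZ linear_sum scalerA mulrC -scalerA scaler_sumr; congr (_ *: _).
apply: eq_bigr => j _; rewrite linearZ /= rescaleX !scalerA; congr (_ *: _).
have a_i_gt0 : (0 < a i)%N by case: (a i) a_i_odd.
apply: (mulIf (c_neq0 i)).
by rewrite -mulrA mmap1_dexp // mulrCA hM mulrA mulrAC.
Qed.

Lemma rescale_dM p : rescale c (dM M p) = dM M' (rescale c p).
Proof.
rewrite !dM_mlinext linear_mlinext mlinext_rescale.
by apply: eq_mlinext => a; apply: rescale_dmon.
Qed.

Lemma rescale_dg_iso : dg_iso M M' (rescale c).
Proof.
split=> [|||d p|]; last exact: rescale_dM.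
- by split; [exact: linearP | exact: rescale_bijective].
- by rewrite -mpolyX0 rescaleX mmap11 scale1r.
- exact: rescale_skewmul.
- by rewrite homogeneous_rescale.
Qed.

End RescaleDG.

Definition outer_mx (K : fieldType) (u v : seq K) : 'M[K]_3 :=
  \matrix_(i < 3, j < 3) (u`_i * v`_j).

Lemma sum_E_outer_mx (K : fieldType) :
  [/\ E K 1 1 + E K 1 2 + E K 1 3 + E K 2 1 + E K 2 2 + E K 2 3
        = outer_mx [:: 1; 1; 0] [:: 1; 1; 1],
      E K 1 3 + E K 2 3 = outer_mx [:: 1; 1; 0] [:: 0; 0; 1]
    & E K 1 1 + E K 1 2 + E K 2 1 + E K 2 2
        = outer_mx [:: 1; 1; 0] [:: 1; 1; 0]].
Proof.
split; apply/matrixP => -[[|[|[|//]]] ?] [[|[|[|//]]] ?];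
  by rewrite !mxE -!val_eqE /= !inordK //= ?(add0r, addr0, mul0r, mulr0, mulr1).
Qed.

Lemma rank_one_dg_isomorphic (K : fieldType) (l t s a0 a1 a2 b0 b1 b2 : K) :
    l != 0 -> t != 0 -> s != 0 ->
    a0 * t = b0 -> a1 * l ^+ 2 * t = b1 -> a2 * s ^+ 2 = t * b2 ->
  dg_isomorphic (outer_mx [:: 1; l; 0] [:: a0; a1; a2])
                (outer_mx [:: 1; 1; 0] [:: b0; b1; b2]).
Proof.
move=> l_neq0 t_neq0 s_neq0 <- <- a2b2.
have -> : b2 = a2 * s ^+ 2 / t by rewrite a2b2 mulrC mulKf.
exists (rescale (fun i => [:: t; t * l; s]`_i)); apply: rescale_dg_iso.
  by case=> [[|[|[|//]]] ?] /=; rewrite ?mulf_neq0.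
by case=> [[|[|[|//]]] ?] [[|[|[|//]]] ?]; rewrite !mxE /=; field.
Qed.

Lemma closed_sqrt (F : closedFieldType) (x : F) : exists y, y ^+ 2 = x.
Proof.
have [y] : exists y, root ('X^2 - x%:P) y.
  by apply/closed_rootP; rewrite size_XnsubC.
by rewrite rootE !hornerE subr_eq0 => /eqP; exists y.
Qed.

Theorem lemma7p2 (k : closedFieldType) (hchar : [pchar k] =i pred0)
  (m11 m12 m13 l1 l2 : k)
  (hm : ~ [/\ m11 = 0, m12 = 0 & m13 = 0])
  (hrel : m12 * l1 ^+ 2 + m13 * l2 ^+ 2 = m11)
  (hl1 : l1 != 0) (hl2 : l2 = 0) :
  let M : 'M[k]_3 :=
    \matrix_(i < 3, j < 3) ([:: 1; l1; l2]`_i * [:: m11; m12; m13]`_j) in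
  [/\ (m12 != 0 -> m13 != 0 ->
         dg_isomorphic M (E k 1 1 + E k 1 2 + E k 1 3 + E k 2 1 + E k 2 2 + E k 2 3)),
      (m12 = 0 -> m13 != 0 ->
         dg_isomorphic M (E k 1 3 + E k 2 3))
    & (m12 != 0 -> m13 = 0 ->
         dg_isomorphic M (E k 1 1 + E k 1 2 + E k 2 1 + E k 2 2))].
Proof.
move=> M; subst l2.
have m11E : m11 = m12 * l1 ^+ 2 by rewrite -hrel expr0n mulr0 addr0.
have [-> -> ->] := sum_E_outer_mx k.
split=> [m12_neq0 m13_neq0 | m12_0 m13_neq0 | m12_neq0 m13_0].
- have m11_neq0 : m11 != 0 by rewrite m11E mulf_neq0 ?expf_neq0.
  have [s s2] := closed_sqrt (m11^-1 / m13).
  have s_neq0 : s != 0 by rewrite -sqrf_eq0 s2 mulf_neq0 ?invr_neq0.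
  apply: (rank_one_dg_isomorphic (t := m11^-1) (s := s)); rewrite ?invr_neq0 //.
  + exact: mulfV.
  + by rewrite -m11E mulfV.
  + by rewrite s2 mulrCA mulfV // !mulr1.
- have m11_0 : m11 = 0 by rewrite m11E m12_0 mul0r.
  apply: (rank_one_dg_isomorphic (t := m13) (s := 1)); rewrite ?oner_neq0 //.
  + by rewrite m11_0 mul0r.
  + by rewrite m12_0 !mul0r.
  + by rewrite expr1n mulr1.
- have m11_neq0 : m11 != 0 by rewrite m11E mulf_neq0 ?expf_neq0.
  apply: (rank_one_dg_isomorphic (t := m11^-1) (s := 1));
    rewrite ?invr_neq0 ?oner_neq0 //.
  + exact: mulfV.
  + by rewrite -m11E mulfV.
  + by rewrite m13_0 mul0r mulr0.
Qed.
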